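(* Let $\dot{\mathcal C}$ be a colored chain on vertices $Z_1\subset Z_2\subset\dots\subset Z_t$, where $Z_i$ has color $c_i$, and let $\bar c_i$ denote the color other than $c_i$. Fix a blue/red coloring of a Boolean lattice $\mathcal Q$ which contains no copy of $\dot{\mathcal C}$. Then: (i) every $Z\in\Phi_1$ has color $\bar c_1$; (ii) for $2\le i\le t$, if $c_i\ne c_{i-1}$, then every $Z\in\Phi_i$ has color $\bar c_i$; (iii) for $2\le i\le t$, if $c_i=c_{i-1}$, then every vertex of $M_i$ has color $c_i$ and every vertex of $\Phi_i\setminus M_i$ has color $\bar c_i$.
   Context: A Boolean lattice $\mathcal Q=\mathcal Q(\mathcal Z)$ is the poset of all subsets of a finite set $\mathcal Z$ ordered by inclusion; for $X\in\mathcal Q$, $\mathcal Q|_\varnothing^X=\{Y\in\mathcal Q: Y\subseteq X\}$, with the inherited coloring. In a colored poset, a copy of a colored poset $\dot P$ is an induced subposet isomorphic to $P$ with each vertex having the color of the corresponding vertex of $\dot P$. For $0\le i\le t$, $\dot{\mathcal C}[i]$ is the colored subchain $Z_1,\dots,Z_i$ of $\dot{\mathcal C}$ (with $\dot{\mathcal C}[0]$ empty). The phase of $X\in\mathcal Q$ is $\varphi(X)=\max\{i\in\{1,\dots,t+1\}: \mathcal Q|_\varnothing^X \text{ contains a copy of } \dot{\mathcal C}[i-1]\}$. $\Phi_i=\{X\in\mathcal Q:\varphi(X)=i\}$ and $M_i$ is the set of minimal elements (w.r.t. inclusion) of $\Phi_i$. *)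

From mathcomp Require Import all_boot.
Set Implicit Arguments. Unset Strict Implicit. Unset Printing Implicit Defensive.

(* The Boolean lattice Q(Z) is {set T} for a finite type T (Z = [set: T]).
   A colored chain C = (Z_1 ⊂ ... ⊂ Z_t) with colors c_1..c_t is the
   sequence c : seq bool (t = size c, c_i = nth false c (i-1)). *)

Definition has_copy (T : finType) (col : {set T} -> bool) (cs : seq bool)
    (X : {set T}) : bool :=
  [exists f : {ffun 'I_(size cs) -> {set T}},
     [forall j : 'I_(size cs), (f j \subset X) && (col (f j) == nth false cs j)] &&
     [forall j : 'I_(size cs), forall k : 'I_(size cs), (j < k)%N ==> (f j \proper f k)]].

(* phase φ(X) = max { i ∈ {1..t+1} : Q|^X contains a copy of C[i-1] },
   where C[i-1] = take (i-1) c. *)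
Definition phase (T : finType) (col : {set T} -> bool) (c : seq bool)
    (X : {set T}) : nat :=
  \max_(i < (size c).+2 | (0 < i)%N && has_copy col (take i.-1 c) X) i.

(* Φ_i membership is phase col c X = i; M_i = minimal elements of Φ_i. *)
Definition in_M (T : finType) (col : {set T} -> bool) (c : seq bool)
    (i : nat) (X : {set T}) : bool :=
  minset (fun Y => phase col c Y == i) X.

From mathcomp Require Import all_boot.

Set Implicit Arguments.
Unset Strict Implicit.
Unset Printing Implicit Defensive.

(* A vertex Z of phase i contains a copy of C[i-1] but none of C[i].  So Z
   cannot have color c_i while lying strictly above a vertex of Phi_i: putting
   Z on top of the copy of C[i-1] below that vertex would give a copy of C[i].
   Conversely, the top Y of a copy of C[i-1] below Z has color c_(i-1) and, by
   monotonicity of the phase, lies in Phi_i.  If c_i != c_(i-1), then either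
   Y = Z has the other color or Y lies strictly below Z; if Z is minimal in
   Phi_i then Y = Z; if not, Z lies strictly above a vertex of Phi_i.  For
   i = 1, Z itself would be a copy of C[1]. *)

Section Copies.
Variables (T : finType) (col : {set T} -> bool).

Definition chain_copy (cs : seq bool) (X : {set T}) (f : nat -> {set T}) :=
  (forall j, (j < size cs)%N -> f j \subset X /\ col (f j) = nth false cs j) /\
  (forall j k, (j < k < size cs)%N -> f j \proper f k).

Lemma has_copyP cs (X : {set T}) :
  reflect (exists f, chain_copy cs X f) (has_copy col cs X).
Proof.
apply: (iffP existsP) => [[F /andP [/forallP F_in /forallP F_incr]]|[f [f_in f_incr]]].
- exists (fun n => if insub n is Some j then F j else set0); split.
  + move=> j lt_j; rewrite insubT /=.
    by case/andP: (F_in (Ordinal lt_j)) => -> /eqP.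
  + move=> j k /andP [lt_jk lt_k]; have lt_j := ltn_trans lt_jk lt_k.
    rewrite !insubT //=.
    exact: (implyP (forallP (F_incr (Ordinal lt_j)) (Ordinal lt_k))).
- exists [ffun j => f (val j)]; apply/andP; split; apply/forallP => j.
  + by rewrite ffunE; case: (f_in _ (ltn_ord j)) => -> ->; rewrite eqxx.
  + apply/forallP => k; apply/implyP => lt_jk; rewrite !ffunE.
    by apply: f_incr; rewrite lt_jk ltn_ord.
Qed.

Lemma has_copy_nil (X : {set T}) : has_copy col [::] X.
Proof. by apply/has_copyP; exists (fun=> X); split=> [|? ? /andP []]. Qed.

Lemma has_copy_subset cs (X Y : {set T}) :
  X \subset Y -> has_copy col cs X -> has_copy col cs Y.
Proof.
move=> sXY /has_copyP [f [f_in f_incr]]; apply/has_copyP; exists f; split=> // j lt_j.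
by case: (f_in j lt_j) => sfX ->; rewrite (subset_trans sfX sXY).
Qed.

Lemma has_copy1 b (Z : {set T}) : col Z = b -> has_copy col [:: b] Z.
Proof.
move=> colZ; apply/has_copyP; exists (fun=> Z).
by split=> [[|//] _|j [|k] /andP [] //]; rewrite subxx.
Qed.

Lemma has_copy_rcons cs b (Y Z : {set T}) :
  has_copy col cs Y -> Y \proper Z -> col Z = b -> has_copy col (rcons cs b) Z.
Proof.
move=> /has_copyP [f [f_in f_incr]] ltYZ colZ; apply/has_copyP.
exists (fun n => if (n < size cs)%N then f n else Z); split.
- move=> j; rewrite size_rcons ltnS nth_rcons leq_eqVlt.
  case/orP => [/eqP ->|lt_j]; first by rewrite ltnn eqxx subxx.
  case: (f_in j lt_j) => sfY colf; rewrite lt_j colf; split=> //.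
  exact: subset_trans sfY (proper_sub ltYZ).
- move=> j k /andP [lt_jk]; rewrite size_rcons ltnS leq_eqVlt.
  case/orP => [/eqP ek|lt_k]; last by rewrite lt_k (ltn_trans lt_jk lt_k) f_incr ?lt_jk.
  rewrite ek ltnn -ek lt_jk; case: (f_in j); first by rewrite -ek.
  by move=> sfY _; exact: sub_proper_trans sfY ltYZ.
Qed.

Lemma has_copy_rcons_top cs b (X : {set T}) : has_copy col (rcons cs b) X ->
  exists2 Y : {set T}, Y \subset X & col Y = b /\ has_copy col (rcons cs b) Y.
Proof.
move=> /has_copyP [f [f_in f_incr]].
have /f_in [sYX] : (size cs < size (rcons cs b))%N by rewrite size_rcons.
rewrite nth_rcons ltnn eqxx => colY.
exists (f (size cs)) => //; split=> //; apply/has_copyP; exists f; split=> // j lt_j.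
case: (f_in j lt_j) => _ ->; split=> //.
move: lt_j; rewrite size_rcons ltnS leq_eqVlt => /orP [/eqP -> //|lt_j].
by rewrite proper_sub // f_incr // lt_j size_rcons ltnSn.
Qed.

Variable c : seq bool.

Lemma leq_phase i (X : {set T}) : (0 < i <= (size c).+1)%N ->
  has_copy col (take i.-1 c) X -> (i <= phase col c X)%N.
Proof.
move=> /andP [i_gt0 i_le] copyX.
by apply: (@leq_bigmax_cond _ _ _ (Ordinal (i_le : i < (size c).+2)%N)); rewrite /= i_gt0.
Qed.

Lemma phase_gt0 (X : {set T}) : (0 < phase col c X)%N.
Proof. by apply: leq_phase; rewrite //= take0 has_copy_nil. Qed.

Lemma phase_leq (X : {set T}) : (phase col c X <= (size c).+1)%N.
Proof. by apply/bigmax_leqP => i _; rewrite -ltnS ltn_ord. Qed.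

Lemma has_copy_phase (X : {set T}) : has_copy col (take (phase col c X).-1 c) X.
Proof.
have : (0 < phase col c X)%N by exact: phase_gt0.
rewrite /phase; elim/big_rec: _ => [//|i n /andP [_ copyX] IH].
by case: (leqP i n).
Qed.

Lemma has_copy_take_phaseN (X : {set T}) : (phase col c X <= size c)%N ->
  ~~ has_copy col (take (phase col c X) c) X.
Proof.
move=> le_phase; apply/negP => /(@leq_phase (phase col c X).+1 X).
by rewrite ltn0Sn ltnS le_phase ltnn => /(_ isT).
Qed.

Lemma leq_phase_subset (X Y : {set T}) :
  X \subset Y -> (phase col c X <= phase col c Y)%N.
Proof.
move=> sXY; apply: leq_phase; first by rewrite phase_gt0 phase_leq.
exact: has_copy_subset sXY (has_copy_phase X).
Qed.

Lemma col_phase1 (Z : {set T}) : (0 < size c)%N -> phase col c Z = 1%N ->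
  col Z = ~~ nth false c 0.
Proof.
move=> c_gt0 phaseZ; apply/negbRL/addbP; rewrite -negb_eqb.
have /has_copy_take_phaseN : (phase col c Z <= size c)%N by rewrite phaseZ.
rewrite phaseZ; apply: contra => /eqP.
by case: c c_gt0 => //= b cs _; rewrite take0; exact: has_copy1.
Qed.

Lemma col_phase_proper i (Y Z : {set T}) : (0 < i <= size c)%N ->
  phase col c Y = i -> phase col c Z = i -> Y \proper Z ->
  col Z = ~~ nth false c i.-1.
Proof.
move=> /andP [i_gt0 le_i] phaseY phaseZ ltYZ; apply/negbRL/addbP; rewrite -negb_eqb.
have /has_copy_take_phaseN : (phase col c Z <= size c)%N by rewrite phaseZ.
rewrite phaseZ; apply: contra => /eqP colZ.
have copyY : has_copy col (take i.-1 c) Y by rewrite -phaseY has_copy_phase.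
rewrite -(prednK i_gt0) (take_nth false) ?prednK //.
exact: has_copy_rcons copyY ltYZ colZ.
Qed.

Lemma phase_top i (Z : {set T}) : (1 < i)%N -> phase col c Z = i ->
  exists2 Y : {set T}, Y \subset Z & col Y = nth false c i.-2 /\ phase col c Y = i.
Proof.
case: i => [|[|i]] // _ phaseZ.
have i_lt : (i < size c)%N by have := phase_leq Z; rewrite phaseZ.
have := has_copy_phase Z; rewrite phaseZ /= (take_nth false) //.
case/has_copy_rcons_top => Y sYZ [colY copyY]; exists Y => //; split=> //.
apply/eqP; rewrite eqn_leq -{1}phaseZ leq_phase_subset //=.
by apply: leq_phase; rewrite /= ?(take_nth false).
Qed.

End Copies.

Theorem proposition14 (T : finType) (c : seq bool) (col : {set T} -> bool) :
  ~~ has_copy col c [set: T] ->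
  (forall Z : {set T}, phase col c Z = 1%N -> col Z = ~~ nth false c 0) /\
  (forall i : nat, (2 <= i <= size c)%N ->
     nth false c i.-1 != nth false c i.-2 ->
     forall Z : {set T}, phase col c Z = i -> col Z = ~~ nth false c i.-1) /\
  (forall i : nat, (2 <= i <= size c)%N ->
     nth false c i.-1 = nth false c i.-2 ->
     forall Z : {set T}, phase col c Z = i ->
       (in_M col c i Z -> col Z = nth false c i.-1) /\
       (~~ in_M col c i Z -> col Z = ~~ nth false c i.-1)).
Proof.
move=> noC.
(* Without a copy of C no vertex has phase t+1, but (i)-(iii) only concern
   phases up to t anyway: the hypothesis is needed only to rule out t = 0. *)
have c_gt0 : (0 < size c)%N by case: c noC => // /negP []; exact: has_copy_nil.
split; [by move=> Z; apply: col_phase1 | split] => i /andP [lt1i le_i] c_i Z phaseZ;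
  have i_range : (0 < i <= size c)%N by rewrite (ltnW lt1i).
- have [Y sYZ [colY phaseY]] := phase_top lt1i phaseZ.
  case: (eqVneq Y Z) => [<- | neYZ].
    by rewrite colY; apply/negbRL/addbP; rewrite -negb_eqb eq_sym.
  by apply: (col_phase_proper i_range phaseY phaseZ); rewrite properEneq neYZ.
- split=> [/minsetP [_ minZ] | nminZ].
    have [Y sYZ [colY /eqP phaseY]] := phase_top lt1i phaseZ.
    by rewrite -(minZ Y phaseY sYZ) colY c_i.
  have [Y minY sYZ] : {Y | in_M col c i Y & Y \subset Z} := minset_exists (introT eqP phaseZ).
  have neYZ : Y != Z by apply: contraNneq nminZ => <-.
  apply: (col_phase_proper i_range (eqP (minsetp minY)) phaseZ).
  by rewrite properEneq neYZ.
Qed.
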